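(* Let $R$ be a commutative ring with nonzero identity and $\delta$ an expansion of ideals of $R$. (1) Let $I$ be a $\delta$-primary ideal of $R$ with $\delta(I)\neq R$. Then $I$ is a $\delta$-$n$-ideal of $R$ if and only if $I\subseteq\sqrt{0}$. (2) Let $I$ be a prime ideal of $R$ with $\delta(I)\neq R$. Then $I$ is a $\delta$-$n$-ideal of $R$ if and only if $I=\sqrt{0}$.
   Context: An expansion of ideals of a ring $R$ is a map $\delta$ from the set of ideals of $R$ to itself such that $I\subseteq\delta(I)$ for every ideal $I$, and $\delta(I)\subseteq\delta(J)$ whenever $I\subseteq J$. $\sqrt{0}$ denotes the nilradical of $R$. Given an expansion $\delta$, a proper ideal $I$ of $R$ is a $\delta$-$n$-ideal if whenever $a,b\in R$ with $ab\in I$ and $a\notin\sqrt{0}$, then $b\in\delta(I)$; it is $\delta$-primary if whenever $a,b\in R$ with $ab\in I$ and $a\notin I$, then $b\in\delta(I)$. *)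

From mathcomp Require Import all_boot all_algebra.
Set Implicit Arguments. Unset Strict Implicit. Unset Printing Implicit Defensive.
Import GRing.Theory.
Local Open Scope ring_scope.

Section Defs.
Variable R : comNzRingType.

Definition incl_pred (I J : R -> Prop) : Prop := forall x, I x -> J x.

Definition is_ideal (I : R -> Prop) : Prop :=
  [/\ I 0,
      (forall x y, I x -> I y -> I (x + y)) &
      (forall r x, I x -> I (r * x))].

Definition proper_set (I : R -> Prop) : Prop := exists x, ~ I x.

Definition proper_ideal (I : R -> Prop) : Prop := is_ideal I /\ proper_set I.

Definition prime_ideal (I : R -> Prop) : Prop :=
  proper_ideal I /\ (forall a b, I (a * b) -> I a \/ I b).

Definition nilrad (x : R) : Prop := exists n : nat, x ^+ n = 0.

(* An expansion: a map from the set of ideals to itself, extensive and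
   monotone. Its values on non-ideal predicates are irrelevant. *)
Definition expansion (delta : (R -> Prop) -> (R -> Prop)) : Prop :=
  [/\ (forall I, is_ideal I -> is_ideal (delta I)),
      (forall I, is_ideal I -> incl_pred I (delta I)) &
      (forall I J, is_ideal I -> is_ideal J -> incl_pred I J ->
                   incl_pred (delta I) (delta J))].

Definition delta_n_ideal (delta : (R -> Prop) -> (R -> Prop)) (I : R -> Prop) :=
  proper_ideal I /\
  (forall a b, I (a * b) -> ~ nilrad a -> delta I b).

Definition delta_primary (delta : (R -> Prop) -> (R -> Prop)) (I : R -> Prop) :=
  proper_ideal I /\
  (forall a b, I (a * b) -> ~ I a -> delta I b).

End Defs.

(* A delta-n-ideal I with delta(I) proper lies in the nilradical: if some
   x in I were not nilpotent, then x * 1 in I would force 1 in delta(I).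
   Conversely a delta-primary ideal inside the nilradical is a delta-n-ideal,
   since a non-nilpotent a is in particular not in I.  A prime ideal is
   delta-primary and contains every nilpotent element, so for primes the
   inclusion I <= sqrt(0) becomes the equality I = sqrt(0). *)
From mathcomp Require Import all_boot all_algebra.
From Stdlib Require Import Classical FunctionalExtensionality PropExtensionality.
Set Implicit Arguments. Unset Strict Implicit.
Import GRing.Theory.
Local Open Scope ring_scope.

Section NIdeals.
Variable R : comNzRingType.
Implicit Types (I J : R -> Prop) (delta : (R -> Prop) -> (R -> Prop)).

Lemma incl_pred_antisym I J : incl_pred I J -> incl_pred J I -> I = J.
Proof.
move=> IJ JI; apply: functional_extensionality => x.
by apply: propositional_extensionality; split; [apply: IJ | apply: JI].
Qed.

Lemma proper_ideal_not1 I : is_ideal I -> proper_set I -> ~ I 1.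
Proof. by move=> [_ _ Imul] [y Iy] I1; apply: Iy; rewrite -[y]mulr1; apply: Imul. Qed.

Lemma delta_n_ideal_sub_nilrad delta I :
  expansion delta -> delta_n_ideal delta I -> proper_set (delta I) ->
  incl_pred I (@nilrad R).
Proof.
move=> [delta_ideal _ _] [[idI _] nI] properD x Ix.
apply: NNPP => xNnil.
have D1 : delta I 1 by apply: (nI x); rewrite ?mulr1.
exact: proper_ideal_not1 (delta_ideal I idI) properD D1.
Qed.

Lemma delta_primary_n_ideal delta I :
  delta_primary delta I -> incl_pred I (@nilrad R) -> delta_n_ideal delta I.
Proof.
move=> [properI primI] Inil; split=> // a b Iab aNnil.
by apply: (primI a b Iab) => /Inil.
Qed.

Lemma prime_ideal_delta_primary delta I :
  expansion delta -> prime_ideal I -> delta_primary delta I.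
Proof.
move=> [_ delta_ext _] [properI primeI]; split=> // a b Iab INa.
by apply: (delta_ext I properI.1); case: (primeI a b Iab).
Qed.

Lemma prime_ideal_exp I x n : prime_ideal I -> I (x ^+ n) -> I x.
Proof.
move=> [[idI properI] primeI]; elim: n => [|n IHn].
  by rewrite expr0 => /(proper_ideal_not1 idI properI).
by rewrite exprS => /primeI [|/IHn].
Qed.

Lemma nilrad_sub_prime_ideal I : prime_ideal I -> incl_pred (@nilrad R) I.
Proof.
move=> primeI x [n xn0]; apply: (prime_ideal_exp (n := n) primeI).
by rewrite xn0; case: primeI => [[[]]].
Qed.

End NIdeals.

Theorem proposition2p6 (R : comNzRingType) (delta : (R -> Prop) -> (R -> Prop)) :
  expansion delta ->
  (forall I : R -> Prop, delta_primary delta I -> proper_set (delta I) ->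
     (delta_n_ideal delta I <-> incl_pred I (@nilrad R))) /\
  (forall I : R -> Prop, prime_ideal I -> proper_set (delta I) ->
     (delta_n_ideal delta I <-> I = @nilrad R)).
Proof.
move=> expD; split=> I.
  move=> primI properD; split=> [nI|]; first exact: delta_n_ideal_sub_nilrad expD nI properD.
  exact: delta_primary_n_ideal.
move=> primeI properD; split.
  move=> nI; apply: incl_pred_antisym; first exact: delta_n_ideal_sub_nilrad expD nI properD.
  exact: nilrad_sub_prime_ideal.
move=> Inil; apply: delta_primary_n_ideal; last by rewrite Inil.
exact: prime_ideal_delta_primary.
Qed.
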